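(* Let $G$ be a finitely generated group with $\operatorname{Out}(G)$ finite. Then the automorphic growth function of $G$ is equivalent (under $\sim$) to its conjugacy growth function.
   Context: With respect to a finite generating set, the automorphic growth function sends $n$ to the number of $\operatorname{Aut}(G)$-orbits of $G$ containing an element of word length at most $n$, and the conjugacy growth function sends $n$ to the number of conjugacy classes containing an element of word length at most $n$. For non-decreasing non-zero $f,g\colon\mathbb{N}\to\mathbb{N}$, $f\preccurlyeq g$ means there is $\lambda\in\mathbb{N}\setminus\{0\}$ with $f(n)\le\lambda g(\lambda n+\lambda)+\lambda$ for all $n$, and $f\sim g$ means $f\preccurlyeq g$ and $g\preccurlyeq f$. *)

From Stdlib Require Import List Arith ClassicalEpsilon.
Import ListNotations.

Record Group := {
  carrier :> Type;
  gmul : carrier -> carrier -> carrier;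
  ginv : carrier -> carrier;
  gone : carrier;
  gmulA : forall x y z, gmul x (gmul y z) = gmul (gmul x y) z;
  gmul1l : forall x, gmul gone x = x;
  gmul1r : forall x, gmul x gone = x;
  gmulVl : forall x, gmul (ginv x) x = gone;
  gmulVr : forall x, gmul x (ginv x) = gone
}.

Arguments gmul {G} : rename.
Arguments ginv {G} : rename.
Arguments gone {G} : rename.

Section Defs.
Variable G : Group.

Definition eval_word (w : list G) : G := fold_right gmul gone w.

Definition alphabet (S : list G) : list G := S ++ map ginv S.

Fixpoint words_upto (A : list G) (n : nat) : list (list G) :=
  match n with
  | 0 => [nil]
  | S m => nil :: flat_map (fun a => map (cons a) (words_upto A m)) A
  end.

Definition generates (S : list G) : Prop :=
  forall x : G, exists w : list G,
    (forall a, In a w -> In a (alphabet S)) /\ eval_word w = x.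

Definition finitely_generated : Prop := exists S : list G, generates S.

(* elements of word length at most n w.r.t. S (with repetitions) *)
Definition ball (S : list G) (n : nat) : list G :=
  map eval_word (words_upto (alphabet S) n).

Definition is_hom (f : G -> G) : Prop := forall x y, f (gmul x y) = gmul (f x) (f y).
Definition is_aut (f : G -> G) : Prop :=
  is_hom f /\ (forall x y, f x = f y -> x = y) /\ (forall y, exists x, f x = y).

Definition conj_by (g x : G) : G := gmul (gmul g x) (ginv g).

(* Out(G) = Aut(G)/Inn(G) is finite: Aut(G) is a finite union of cosets
   phi ∘ Inn(G) *)
Definition Out_finite : Prop :=
  exists l : list (G -> G), (forall phi, In phi l -> is_aut phi) /\
    forall a, is_aut a -> exists phi, In phi l /\
      exists g : G, forall x, a x = phi (conj_by g x).

Definition aut_equiv (x y : G) : Prop := exists a, is_aut a /\ a x = y.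
Definition conjugate (x y : G) : Prop := exists g, conj_by g x = y.

(* number of R-classes meeting a list (R assumed an equivalence relation) *)
Fixpoint count_classes (R : G -> G -> Prop) (s : list G) : nat :=
  match s with
  | nil => 0
  | x :: s' =>
    if excluded_middle_informative (exists y, In y s' /\ R x y)
    then count_classes R s' else S (count_classes R s')
  end.

Definition automorphic_growth (S : list G) (n : nat) : nat :=
  count_classes aut_equiv (ball S n).
Definition conjugacy_growth (S : list G) (n : nat) : nat :=
  count_classes conjugate (ball S n).
End Defs.

Definition growth_le (f g : nat -> nat) : Prop :=
  exists lam : nat, 0 < lam /\ forall n, f n <= lam * g (lam * n + lam) + lam.
Definition growth_equiv (f g : nat -> nat) : Prop := growth_le f g /\ growth_le g f.

(* Conjugate elements are automorphic, so every automorphism class is a union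
   of conjugacy classes; conversely, if Aut(G) = phi_1 Inn(G) u ... u phi_k Inn(G),
   then the automorphism class of r consists of the conjugacy classes of
   phi_1 r, ..., phi_k r.  Counting classes meeting a ball therefore gives
   a(n) <= c(n) <= k a(n) for the two growth functions, and both are
   nondecreasing in n. *)
From Stdlib Require Import List Arith Lia RelationClasses ClassicalEpsilon.

Arguments gmulA {_}.
Arguments gmul1l {_}.
Arguments gmul1r {_}.
Arguments gmulVl {_}.
Arguments gmulVr {_}.

Section GroupFacts.
Variable G : Group.

Lemma inv_unique (x y : G) : gmul x y = gone -> y = ginv x.
Proof.
  intro Hxy. rewrite <- (gmul1l y), <- (gmulVl x), <- gmulA, Hxy, gmul1r.
  reflexivity.
Qed.

Lemma inv_mul (x y : G) : ginv (gmul x y) = gmul (ginv y) (ginv x).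
Proof.
  symmetry; apply inv_unique.
  rewrite <- gmulA, (gmulA y), gmulVr, gmul1l, gmulVr. reflexivity.
Qed.

Lemma inv_one : ginv (@gone G) = gone.
Proof. symmetry; apply inv_unique, gmul1l. Qed.

Lemma conj_by_mul (g h x : G) :
  conj_by G g (conj_by G h x) = conj_by G (gmul g h) x.
Proof. unfold conj_by. rewrite inv_mul, !gmulA. reflexivity. Qed.

Lemma conj_by_one (x : G) : conj_by G gone x = x.
Proof. unfold conj_by. rewrite inv_one, gmul1l, gmul1r. reflexivity. Qed.

Lemma conj_byK (g x : G) : conj_by G (ginv g) (conj_by G g x) = x.
Proof. rewrite conj_by_mul, gmulVl, conj_by_one. reflexivity. Qed.

Lemma conj_byVK (g x : G) : conj_by G g (conj_by G (ginv g) x) = x.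
Proof. rewrite conj_by_mul, gmulVr, conj_by_one. reflexivity. Qed.

Lemma conj_by_aut (g : G) : is_aut G (conj_by G g).
Proof.
  split; [|split].
  - intros x y. unfold conj_by.
    rewrite !gmulA, <- (gmulA _ (ginv g) g), gmulVl, gmul1r. reflexivity.
  - intros x y Hxy. rewrite <- (conj_byK g x), <- (conj_byK g y), Hxy.
    reflexivity.
  - intro y. exists (conj_by G (ginv g) y). apply conj_byVK.
Qed.

Lemma hom_one (f : G -> G) : is_hom G f -> f gone = gone.
Proof.
  intro Hf.
  assert (He : gmul (f gone) (f gone) = f gone) by (rewrite <- Hf, gmul1l; reflexivity).
  transitivity (gmul (ginv (f gone)) (gmul (f gone) (f gone))).
  - rewrite gmulA, gmulVl, gmul1l. reflexivity.
  - rewrite He. apply gmulVl.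
Qed.

Lemma hom_inv (f : G -> G) (x : G) : is_hom G f -> f (ginv x) = ginv (f x).
Proof. intro Hf. apply inv_unique. rewrite <- Hf, gmulVr. apply hom_one, Hf. Qed.

Lemma hom_conj (f : G -> G) (g x : G) : is_hom G f ->
  f (conj_by G g x) = conj_by G (f g) (f x).
Proof. intro Hf. unfold conj_by. rewrite !Hf, hom_inv by exact Hf. reflexivity. Qed.

Lemma aut_inverse (f : G -> G) : is_aut G f ->
  exists f', is_aut G f' /\ forall x, f' (f x) = x.
Proof.
  intros [Hhom [Hinj Hsurj]].
  destruct (choice (fun y x => f x = y) Hsurj) as [f' Hf'].
  assert (Hf'K : forall x, f' (f x) = x) by (intro x; apply Hinj, Hf').
  exists f'. split; [split; [|split]|]; auto.
  - intros x y. apply Hinj. rewrite Hhom, !Hf'. reflexivity.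
  - intros x y Hxy. rewrite <- (Hf' x), <- (Hf' y), Hxy. reflexivity.
  - intro y. exists (f y). apply Hf'K.
Qed.

Lemma aut_comp (f f' : G -> G) : is_aut G f -> is_aut G f' ->
  is_aut G (fun x => f' (f x)).
Proof.
  intros [Hhom [Hinj Hsurj]] [Hhom' [Hinj' Hsurj']].
  split; [|split].
  - intros x y. rewrite Hhom, Hhom'. reflexivity.
  - intros x y Hxy. apply Hinj, Hinj', Hxy.
  - intro z. destruct (Hsurj' z) as [y <-]. destruct (Hsurj y) as [x <-].
    exists x. reflexivity.
Qed.

#[global] Instance aut_equiv_equiv : Equivalence (aut_equiv G).
Proof.
  split.
  - intro x. exists (conj_by G gone). split; [apply conj_by_aut | apply conj_by_one].
  - intros x y [f [Hf <-]]. destruct (aut_inverse f Hf) as [f' [Hf' Hf'K]].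
    exists f'. auto.
  - intros x y z [f [Hf <-]] [f' [Hf' <-]].
    exists (fun x => f' (f x)). split; [apply aut_comp; assumption | reflexivity].
Qed.

#[global] Instance conjugate_equiv : Equivalence (conjugate G).
Proof.
  split.
  - intro x. exists gone. apply conj_by_one.
  - intros x y [g <-]. exists (ginv g). apply conj_byK.
  - intros x y z [g <-] [h <-]. exists (gmul h g). symmetry. apply conj_by_mul.
Qed.

Lemma conjugate_aut_equiv (x y : G) : conjugate G x y -> aut_equiv G x y.
Proof. intros [g Hg]. exists (conj_by G g). split; [apply conj_by_aut | exact Hg]. Qed.

Lemma aut_equiv_conjugate_image (l : list (G -> G)) :
  (forall phi, In phi l -> is_hom G phi) ->
  (forall a, is_aut G a -> exists phi, In phi l /\
     exists g, forall x, a x = phi (conj_by G g x)) ->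
  forall r x, aut_equiv G r x -> exists phi, In phi l /\ conjugate G x (phi r).
Proof.
  intros Hhom Hcoset r x [a [Ha <-]].
  destruct (Hcoset a Ha) as [phi [Hphi [g Hg]]].
  exists phi. split; [exact Hphi|].
  exists (ginv (phi g)). rewrite Hg, hom_conj by auto. apply conj_byK.
Qed.

End GroupFacts.

Section Balls.
Variable G : Group.

Lemma words_upto_incl (A : list G) (n : nat) :
  incl (words_upto G A n) (words_upto G A (S n)).
Proof.
  induction n as [|n IHn]; intros w Hw.
  - destruct Hw as [<-|[]]. left. reflexivity.
  - destruct Hw as [<-|Hw]; [left; reflexivity|].
    apply in_flat_map in Hw as [a [Ha Hw]]. apply in_map_iff in Hw as [w' [<- Hw']].
    right. apply in_flat_map. exists a. split; [exact Ha|].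
    apply in_map, IHn, Hw'.
Qed.

Lemma ball_incl (S : list G) (m n : nat) : m <= n -> incl (ball G S m) (ball G S n).
Proof.
  induction 1 as [|n _ IH]; [apply incl_refl|].
  eapply incl_tran; [exact IH|]. apply incl_map, words_upto_incl.
Qed.

End Balls.

Section ClassCount.
Variable G : Group.
Variable R : G -> G -> Prop.
Context `{Equivalence G R}.

Definition covers (c s : list G) : Prop :=
  forall x, In x s -> exists y, In y c /\ R x y.

Lemma count_classes_reps (s : list G) :
  exists c, length c = count_classes G R s /\ covers c s.
Proof.
  induction s as [|x s [c [Hlen Hcov]]]; simpl.
  - exists nil. split; [reflexivity | intros ? []].
  - destruct (excluded_middle_informative _) as [[y [Hy Rxy]]|_].
    + exists c. split; [exact Hlen|].
      intros z [<-|Hz]; [|auto].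
      destruct (Hcov y Hy) as [r [Hr Ryr]]. exists r. split; [exact Hr|].
      transitivity y; assumption.
    + exists (x :: c). split; [simpl; congruence|].
      intros z [<-|Hz]; [exists x; split; [left|]; reflexivity|].
      destruct (Hcov z Hz) as [r [Hr Rzr]]. exists r. split; [right|]; assumption.
Qed.

Lemma count_classes_le_cover (s c : list G) :
  covers c s -> count_classes G R s <= length c.
Proof.
  revert c. induction s as [|x s IHs]; intros c Hcov; simpl; [lia|].
  destruct (excluded_middle_informative _) as [_|Hnew].
  - apply IHs. intros z Hz. apply Hcov. right. exact Hz.
  - destruct (Hcov x (or_introl eq_refl)) as [r [Hr Rxr]].
    apply in_split in Hr as [c1 [c2 ->]].
    enough (count_classes G R s <= length (c1 ++ c2))
      by (rewrite !length_app in *; simpl; lia).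
    apply IHs. intros z Hz. destruct (Hcov z (or_intror Hz)) as [y [Hy Rzy]].
    apply in_app_iff in Hy as [Hy|[<-|Hy]].
    + exists y. split; [apply in_app_iff; left|]; assumption.
    + exfalso. apply Hnew. exists z. split; [exact Hz|].
      transitivity r; [exact Rxr | symmetry; exact Rzy].
    + exists y. split; [apply in_app_iff; right|]; assumption.
Qed.

Lemma count_classes_incl (s t : list G) :
  incl s t -> count_classes G R s <= count_classes G R t.
Proof.
  intro Hst. destruct (count_classes_reps t) as [c [<- Hcov]].
  apply count_classes_le_cover. intros x Hx. apply Hcov, Hst, Hx.
Qed.

End ClassCount.

Arguments count_classes_reps {G R _} s.
Arguments count_classes_le_cover {G R _} s c.
Arguments count_classes_incl {G R _} s t.

Section ClassComparison.
Variable G : Group.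
Variables R R' : G -> G -> Prop.
Context `{Equivalence G R} `{Equivalence G R'}.

Lemma count_classes_sub (s : list G) :
  (forall x y, R x y -> R' x y) -> count_classes G R' s <= count_classes G R s.
Proof.
  intro HRR'. destruct (count_classes_reps (R := R) s) as [c [<- Hcov]].
  apply count_classes_le_cover. intros x Hx.
  destruct (Hcov x Hx) as [y [Hy Rxy]]. exists y. auto.
Qed.

Lemma count_classes_le_images (fs : list (G -> G)) (s : list G) :
  (forall r x, R' r x -> exists f, In f fs /\ R x (f r)) ->
  count_classes G R s <= length fs * count_classes G R' s.
Proof.
  intro Himg. destruct (count_classes_reps (R := R') s) as [c [<- Hcov]].
  rewrite Nat.mul_comm,
    <- (flat_map_constant_length (fun r => map (fun f => f r) fs) c)
    by (intros; apply length_map).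
  apply count_classes_le_cover. intros x Hx.
  destruct (Hcov x Hx) as [r [Hr Rxr]].
  destruct (Himg r x (symmetry Rxr)) as [f [Hf Rxfr]].
  exists (f r). split; [|exact Rxfr].
  apply in_flat_map. exists r. split; [exact Hr|]. apply (in_map (fun f => f r)), Hf.
Qed.

End ClassComparison.

Arguments count_classes_sub {G} R R' {_ _} s.
Arguments count_classes_le_images {G} R R' {_ _} fs s.

Lemma growth_le_of_le_mul (f g : nat -> nat) (c : nat) :
  (forall n, f n <= c * g n) -> (forall m n, m <= n -> g m <= g n) -> growth_le f g.
Proof.
  intros Hfg Hg. exists (S c). split; [lia|]. intro n.
  specialize (Hfg n). assert (g n <= g (S c * n + S c)) by (apply Hg; lia). nia.
Qed.

Theorem mainTheorem17 (G : Group) :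
  finitely_generated G -> Out_finite G ->
  forall S : list G, generates G S ->
  growth_equiv (automorphic_growth G S) (conjugacy_growth G S).
Proof.
  (* Both bounds hold for every finite S. *)
  intros _ [l [Hl Hcoset]] S _.
  assert (Hhom : forall phi, In phi l -> is_hom G phi)
    by (intros phi Hphi; apply Hl, Hphi).
  split.
  - apply growth_le_of_le_mul with (c := 1).
    + intro n. rewrite Nat.mul_1_l.
      apply (count_classes_sub (conjugate G) (aut_equiv G)), conjugate_aut_equiv.
    + intros m n Hmn. apply count_classes_incl, ball_incl, Hmn.
  - apply growth_le_of_le_mul with (c := length l).
    + intro n. apply (count_classes_le_images (conjugate G) (aut_equiv G)).
      apply aut_equiv_conjugate_image; assumption.
    + intros m n Hmn. apply count_classes_incl, ball_incl, Hmn.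
Qed.
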